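(* Let $N\geq 2$ and let $P_N(z)=z^N+\sum_{m=1}^{N} c_m z^{N-m}=\prod_{n=1}^{N}(z-x_n)$ be a monic polynomial with complex coefficients $c_1,\dots,c_N$ and zeros $x_1,\dots,x_N$. Choose complex numbers $y_1(0),\dots,y_N(0)$, pairwise distinct, and define $$\gamma_m(0)=(-1)^m\sum_{N\geq n_1>n_2>\dots>n_m\geq 1} y_{n_1}(0)\,y_{n_2}(0)\cdots y_{n_m}(0),\qquad m=1,\dots,N,$$ so that $z^N+\sum_{m=1}^N\gamma_m(0)z^{N-m}=\prod_{n=1}^N(z-y_n(0))$. Let $y_1(t),\dots,y_N(t)$, $t$ real, be the solution with these initial values of the system $$\dot y_n(t)=-\Big\{\prod_{\ell=1,\ \ell\neq n}^{N}\big[y_n(t)-y_\ell(t)\big]^{-1}\Big\}\sum_{m=1}^{N}\big[c_m-\gamma_m(0)\big]\,\big[y_n(t)\big]^{N-m},\qquad n=1,\dots,N,$$ and suppose this solution exists on the whole interval $0\leq t\leq 1$ with $y_n(t)\neq y_\ell(t)$ for all $n\neq \ell$ and all $t\in[0,1]$. Then $x_n=y_n(1)$ for $n=1,\dots,N$ (as unordered sets, i.e. up to relabelling, $\{y_1(1),\dots,y_N(1)\}$ is the set of zeros of $P_N$ counted with multiplicity).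
   Context: A superimposed dot denotes differentiation with respect to the real variable $t$. The zeros of a polynomial are regarded as an unordered set. *)

From HB Require Import structures.
From mathcomp Require Import all_boot all_order all_algebra all_fingroup.
From mathcomp Require Import all_classical all_reals all_analysis.
From mathcomp Require Import complex.

Set Implicit Arguments.
Unset Strict Implicit.
Unset Printing Implicit Defensive.

Import Order.TTheory GRing.Theory Num.Theory.
Import numFieldNormedType.Exports.
Local Open Scope ring_scope.
Local Open Scope classical_set_scope.

Definition has_cderiv {R : realType} (f : R -> R[i]) (t : R) (l : R[i]) : Prop :=
  is_derive t 1 (fun s => complex.Re (f s)) (complex.Re l) /\
  is_derive t 1 (fun s => complex.Im (f s)) (complex.Im l).

Definition ccontinuous_on {R : realType} (A : set R) (f : R -> R[i]) : Prop :=
  {within A, continuous (fun s => complex.Re (f s))} /\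
  {within A, continuous (fun s => complex.Im (f s))}.

(* gamma_m = (-1)^m * sum_{N >= n_1 > ... > n_m >= 1} y_{n_1} ... y_{n_m};
   strictly decreasing m-tuples of indices are the same as m-element subsets. *)
Definition gamma {R : realType} {N : nat} (y : 'I_N -> R[i]) (m : nat) : R[i] :=
  (-1) ^+ m * \sum_(S : {set 'I_N} | #|S| == m) \prod_(n in S) y n.

From HB Require Import structures.
From mathcomp Require Import all_boot all_order all_algebra all_fingroup.
From mathcomp Require Import all_classical all_reals all_analysis.
From mathcomp Require Import complex.
From mathcomp Require Import lra.

(* The monic polynomial P_t(z) = prod_n (z - y_n(t)) moves linearly in t.  Indeed
   d/dt P_t(z) = - sum_n y_n'(t) prod_(l <> n) (z - y_l(t)), and the equations of
   motion turn this sum into the Lagrange interpolation formula, at the distinct nodes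
   y_n(t), of Q(z) = sum_m (c_m - gamma_m(0)) z^(N-m), which has degree < N; so
   d/dt P_t = Q.  Hence P_1 = P_0 + Q, which is P_N because
   P_0(z) = z^N + sum_m gamma_m(0) z^(N-m) (Vieta), and the zeros y_n(1) of P_1 are
   the x_n. *)

Set Implicit Arguments.
Unset Strict Implicit.
Unset Printing Implicit Defensive.

Import Order.TTheory GRing.Theory Num.Theory.
Import numFieldNormedType.Exports.
Local Open Scope ring_scope.
Local Open Scope classical_set_scope.

Section ComplexValuedCalculus.
Variable R : realType.
Implicit Types (f g : R -> R[i]) (A : set R).

Local Notation Re := (@complex.Re R).
Local Notation Im := (@complex.Im R).

Lemma ReD (a b : R[i]) : Re (a + b) = Re a + Re b. Proof. by case: a; case: b. Qed.
Lemma ImD (a b : R[i]) : Im (a + b) = Im a + Im b. Proof. by case: a; case: b. Qed.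
Lemma ReB (a b : R[i]) : Re (a - b) = Re a - Re b. Proof. by case: a; case: b. Qed.
Lemma ImB (a b : R[i]) : Im (a - b) = Im a - Im b. Proof. by case: a; case: b. Qed.
Lemma ReM (a b : R[i]) : Re (a * b) = Re a * Re b - Im a * Im b.
Proof. by case: a; case: b. Qed.
Lemma ImM (a b : R[i]) : Im (a * b) = Re a * Im b + Im a * Re b.
Proof. by case: a; case: b. Qed.

Lemma complex_eq (a b : R[i]) : Re a = Re b -> Im a = Im b -> a = b.
Proof. by case: a; case: b => ? ? ? ? /= -> ->. Qed.

Lemma has_cderiv_cst (a : R[i]) t : has_cderiv (fun=> a) t 0.
Proof. by split; apply: is_derive_cst. Qed.

Lemma has_cderivB f g t (f' g' : R[i]) : has_cderiv f t f' -> has_cderiv g t g' ->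
  has_cderiv (fun s => f s - g s) t (f' - g').
Proof.
move=> [fr fi] [gr gi]; split.
- rewrite (_ : (fun s => _) = (fun s => Re (f s)) - (fun s => Re (g s))).
    by apply: is_derive_eq; rewrite ReB.
  by apply: funext => s; rewrite ReB.
- rewrite (_ : (fun s => _) = (fun s => Im (f s)) - (fun s => Im (g s))).
    by apply: is_derive_eq; rewrite ImB.
  by apply: funext => s; rewrite ImB.
Qed.

Lemma has_cderivM f g t (f' g' : R[i]) : has_cderiv f t f' -> has_cderiv g t g' ->
  has_cderiv (fun s => f s * g s) t (f' * g t + f t * g').
Proof.
move=> [fr fi] [gr gi]; split.
- rewrite (_ : (fun s => _) = (fun s => Re (f s)) * (fun s => Re (g s)) -
                              (fun s => Im (f s)) * (fun s => Im (g s))).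
    by apply: is_derive_eq; rewrite ReD !ReM /GRing.scale /=; lra.
  by apply: funext => s; rewrite ReM.
- rewrite (_ : (fun s => _) = (fun s => Re (f s)) * (fun s => Im (g s)) +
                              (fun s => Im (f s)) * (fun s => Re (g s))).
    by apply: is_derive_eq; rewrite ImD !ImM /GRing.scale /=; lra.
  by apply: funext => s; rewrite ImM.
Qed.

Lemma has_cderiv_prod (I : eqType) (r : seq I) (F : I -> R -> R[i]) (F' : I -> R[i]) t :
  uniq r -> (forall i, i \in r -> has_cderiv (F i) t (F' i)) ->
  has_cderiv (fun s => \prod_(i <- r) F i s) t
    (\sum_(i <- r) F' i * \prod_(j <- r | j != i) F j t).
Proof.
elim: r => [_ _|a r IH /= /andP[ar ur] dF].
  by under eq_fun do rewrite big_nil; rewrite big_nil; apply: has_cderiv_cst.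
under eq_fun do rewrite big_cons.
have := has_cderivM (dF a (mem_head a r)) (IH ur (fun i ri => dF i (mem_behead (s := a :: r) ri))).
congr has_cderiv; rewrite 2!big_cons /= eqxx; congr (_ * _ + _).
  rewrite big_seq [RHS]big_seq_cond; apply: eq_bigl => j.
  by case: eqP => [->|]; rewrite ?andbT ?(negPf ar).
rewrite big_distrr /= big_seq [RHS]big_seq; apply: eq_bigr => i ri.
have ai : a != i by apply: contraNneq ar => ->.
by rewrite big_cons ai mulrCA.
Qed.

Lemma ccontinuous_on_cst A (a : R[i]) : ccontinuous_on A (fun=> a).
Proof. by split=> x; apply: cvg_cst. Qed.

Lemma ccontinuous_onB A f g : ccontinuous_on A f -> ccontinuous_on A g ->
  ccontinuous_on A (fun s => f s - g s).
Proof.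
move=> [fr fi] [gr gi]; split=> x.
- have -> : (fun s => Re (f s - g s)) = (fun s => Re (f s) - Re (g s)).
    by apply: funext => s; rewrite ReB.
  exact: cvgB (fr x) (gr x).
- have -> : (fun s => Im (f s - g s)) = (fun s => Im (f s) - Im (g s)).
    by apply: funext => s; rewrite ImB.
  exact: cvgB (fi x) (gi x).
Qed.

Lemma ccontinuous_onM A f g : ccontinuous_on A f -> ccontinuous_on A g ->
  ccontinuous_on A (fun s => f s * g s).
Proof.
move=> [fr fi] [gr gi]; split=> x.
- have -> : (fun s => Re (f s * g s)) =
            (fun s => Re (f s) * Re (g s) - Im (f s) * Im (g s)).
    by apply: funext => s; rewrite ReM.
  exact: cvgB (cvgM (fr x) (gr x)) (cvgM (fi x) (gi x)).
- have -> : (fun s => Im (f s * g s)) =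
            (fun s => Re (f s) * Im (g s) + Im (f s) * Re (g s)).
    by apply: funext => s; rewrite ImM.
  exact: cvgD (cvgM (fr x) (gi x)) (cvgM (fi x) (gr x)).
Qed.

Lemma ccontinuous_on_prod A (I : Type) (r : seq I) (F : I -> R -> R[i]) :
  (forall i, ccontinuous_on A (F i)) -> ccontinuous_on A (fun s => \prod_(i <- r) F i s).
Proof.
move=> cF; elim: r => [|a r IH].
  by under eq_fun do rewrite big_nil; apply: ccontinuous_on_cst.
by under eq_fun do rewrite big_cons; apply: ccontinuous_onM.
Qed.

Lemma has_cderiv_cst_increment f (a b : R) (l : R[i]) : a < b ->
  ccontinuous_on `[a, b] f -> (forall t, a < t < b -> has_cderiv f t l) ->
  f b - f a = (b - a)%:C%C * l.
Proof.
move=> ab [fr fi] df; apply: complex_eq; rewrite ?ReB ?ImB ?ReM ?ImM /= mul0r.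
- have [t _ ->] := MVT ab (fun t t_ab => (df t t_ab).1) fr.
  by rewrite subr0 mulrC.
- have [t _ ->] := MVT ab (fun t t_ab => (df t t_ab).2) fi.
  by rewrite addr0 mulrC.
Qed.

End ComplexValuedCalculus.

Lemma size_prod_XsubC_ord (R : nzRingType) N (u : 'I_N -> R) :
  size (\prod_(n < N) ('X - (u n)%:P)) = N.+1.
Proof. by rewrite size_prod_XsubC [index_enum _]unlock -enumT size_enum_ord. Qed.

Section Interpolation.
Variable F : fieldType.

Lemma size_prod_XsubC_neq N (u : 'I_N -> F) (n : 'I_N) :
  size (\prod_(l < N | l != n) ('X - (u l)%:P)) = N.
Proof.
rewrite -big_filter size_prod_XsubC size_filter -sum1_count sum1_card cardC1 card_ord.
by case: N u n => [|N] ? [].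
Qed.

Lemma lagrange_interpolation N (u : 'I_N -> F) (Q : {poly F}) z :
  injective u -> (size Q <= N)%N ->
  \sum_(n < N) Q.[u n] * (\prod_(l < N | l != n) (u n - u l))^-1
     * \prod_(l < N | l != n) (z - u l) = Q.[z].
Proof.
move=> u_inj sQ.
pose L := \sum_(n < N) (Q.[u n] * (\prod_(l < N | l != n) (u n - u l))^-1)
            *: \prod_(l < N | l != n) ('X - (u l)%:P).
have hornerL v : L.[v] = \sum_(n < N) Q.[u n] * (\prod_(l < N | l != n) (u n - u l))^-1
                          * \prod_(l < N | l != n) (v - u l).
  rewrite horner_sum; apply: eq_bigr => n _.
  by rewrite hornerZ horner_prod; under eq_bigr do rewrite hornerXsubC.
suff LQ : L = Q by rewrite -hornerL LQ.
apply/eqP; rewrite -subr_eq0; apply/eqP.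
apply: (@roots_geq_poly_eq0 _ _ (map u (enum 'I_N))).
- apply/allP => _ /mapP[k _ ->]; rewrite /root hornerD hornerN hornerL.
  rewrite (bigD1 k) //= [\sum_(i < N | i != k) _]big1 => [|n nk]; last first.
    by rewrite [X in _ * X](bigD1 k) 1?eq_sym //= subrr mul0r mulr0.
  rewrite addr0 -mulrA mulVf ?mulr1 ?subrr //.
  by apply/prodf_neq0 => l lk; rewrite subr_eq0 (inj_eq u_inj) eq_sym.
- by rewrite map_inj_uniq ?enum_uniq.
- rewrite size_map size_enum_ord; apply: (leq_trans (size_polyD _ _)).
  rewrite geq_max size_polyN sQ andbT; apply: (leq_trans (size_sum _ _ _)).
  apply/bigmax_leqP => n _; apply: (leq_trans (size_scale_leq _ _)).
  by rewrite size_prod_XsubC_neq.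
Qed.

End Interpolation.

Section Vieta.
Variable R : realType.

Lemma coef_prod_XsubC_gamma N (u : 'I_N -> R[i]) m : (m <= N)%N ->
  (\prod_(n < N) ('X - (u n)%:P))`_(N - m) = gamma u m.
Proof.
move=> mN; rewrite (_ : \prod_(n < N) _ = \prod_(a <- map u (enum 'I_N)) ('X - a%:P)).
  rewrite coef_prod_XsubC size_map size_enum_ord ?leq_subr // subKn //.
  congr (_ * _); apply: eq_bigr => S _; apply: eq_bigr => n _.
  by rewrite (nth_map n) ?size_enum_ord // nth_ord_enum.
by rewrite big_map enumT.
Qed.

Lemma gamma0 N (u : 'I_N -> R[i]) : gamma u 0 = 1.
Proof.
by rewrite /gamma expr0 mul1r (big_pred1 finset.set0) ?big_set0 // => S; rewrite /= cards_eq0.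
Qed.

Lemma prod_sub_gamma N (u : 'I_N -> R[i]) z :
  \prod_(n < N) (z - u n) = z ^+ N + \sum_(1 <= m < N.+1) gamma u m * z ^+ (N - m).
Proof.
pose p := \prod_(n < N) ('X - (u n)%:P).
have sp : size p = N.+1 := size_prod_XsubC_ord _.
transitivity p.[z]; first by rewrite horner_prod; under [RHS]eq_bigr do rewrite hornerXsubC.
rewrite horner_coef sp (reindex_inj rev_ord_inj) big_ord_recl big_add1 big_mkord /=.
rewrite /p subSS coef_prod_XsubC_gamma // gamma0 mul1r subn0; congr (_ + _).
by apply: eq_bigr => i _; rewrite subSS /bump /= add1n coef_prod_XsubC_gamma.
Qed.

End Vieta.

Lemma perm_eq_of_prod_sub (F : numFieldType) N (x w : 'I_N -> F) :
  (forall z, \prod_(n < N) (z - x n) = \prod_(n < N) (z - w n)) ->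
  exists s : 'S_N, forall n, x n = w (s n).
Proof.
move=> xw.
pose p (v : 'I_N -> F) := \prod_(n < N) ('X - (v n)%:P).
have hornerp v z : (p v).[z] = \prod_(n < N) (z - v n).
  by rewrite horner_prod; under eq_bigr do rewrite hornerXsubC.
have size_p v : size (p v) = N.+1 := size_prod_XsubC_ord _.
have pxw : p x = p w.
  apply/eqP; rewrite -subr_eq0; apply/eqP.
  apply: (@roots_geq_poly_eq0 _ _ [seq k%:R | k <- iota 0 N.+1]).
  - by apply/allP => _ /mapP[k _ ->]; rewrite /root hornerD hornerN !hornerp xw subrr.
  - by rewrite map_inj_uniq ?iota_uniq // => a b /eqP; rewrite eqr_nat => /eqP.
  - rewrite size_map size_iota; apply: (leq_trans (size_polyD _ _)).
    by rewrite size_polyN !size_p maxnn.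
have /tuple_permP[s xs] : perm_eq [tuple x n | n < N] [tuple w n | n < N].
  by apply: prod_XsubC_eq; rewrite !big_map; apply: pxw.
exists s => n; have := congr1 (fun t => tnth t n) (val_inj xs).
by rewrite /= !tnth_mktuple.
Qed.

Section NodePolynomial.
Variable R : realType.

Lemma has_cderiv_prod_sub N (y : R -> 'I_N -> R[i]) (Q : {poly R[i]}) t z :
  (size Q <= N)%N -> injective (y t) ->
  (forall n, has_cderiv (fun s => y s n) t
                (- (\prod_(l < N | l != n) (y t n - y t l))^-1 * Q.[y t n])) ->
  has_cderiv (fun s => \prod_(n < N) (z - y s n)) t Q.[z].
Proof.
move=> sQ y_inj dy.
have := has_cderiv_prod (index_enum_uniq 'I_N)
  (fun n _ => has_cderivB (has_cderiv_cst z t) (dy n)).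
congr has_cderiv; rewrite -(lagrange_interpolation z y_inj sQ).
by apply: eq_bigr => n _; rewrite sub0r !mulNr opprK (mulrC _^-1).
Qed.

End NodePolynomial.

Theorem mainTheorem1 (R : realType) (N : nat) (c : nat -> R[i])
    (x : 'I_N -> R[i]) (y : R -> 'I_N -> R[i]) :
  (2 <= N)%N ->
  (* P_N(z) = z^N + sum_{m=1}^N c_m z^(N-m) = prod_n (z - x_n) *)
  (forall z : R[i],
      z ^+ N + \sum_(1 <= m < N.+1) c m * z ^+ (N - m) = \prod_(n < N) (z - x n)) ->
  (* pairwise distinct initial values *)
  (forall n l : 'I_N, n != l -> y 0 n != y 0 l) ->
  (* the solution exists (is continuous) on [0,1] ... *)
  (forall n : 'I_N, ccontinuous_on `[0, 1] (fun t => y t n)) ->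
  (* ... and satisfies the ODE system *)
  (forall t : R, 0 < t < 1 -> forall n : 'I_N,
      has_cderiv (fun s => y s n) t
        (- (\prod_(l < N | l != n) (y t n - y t l)^-1)
           * \sum_(1 <= m < N.+1) (c m - gamma (y 0) m) * (y t n) ^+ (N - m))) ->
  (* the y_n(t) stay pairwise distinct on [0,1] *)
  (forall t : R, 0 <= t <= 1 -> forall n l : 'I_N, n != l -> y t n != y t l) ->
  (* conclusion: the zeros are the y_n(1), up to relabelling *)
  exists s : 'S_N, forall n : 'I_N, x n = y 1 (s n).
Proof.
(* Neither [2 <= N] nor the distinctness at [t = 0], a case of the last hypothesis,
   is needed. *)
move=> _ hc _ y_cont y_deriv y_neq.
pose Q : {poly R[i]} := \sum_(1 <= m < N.+1) (c m - gamma (y 0) m) *: 'X^(N - m).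
have hornerQ v : Q.[v] = \sum_(1 <= m < N.+1) (c m - gamma (y 0) m) * v ^+ (N - m).
  by rewrite horner_sum; under eq_bigr do rewrite hornerZ hornerXn.
have size_Q : (size Q <= N)%N.
  apply: (leq_trans (size_sum _ _ _)); apply/bigmax_leqP_seq => m.
  rewrite mem_index_iota => /andP[m_gt0 m_le] _.
  apply: (leq_trans (size_scale_leq _ _)).
  by rewrite size_polyXn ltn_subrL m_gt0 (leq_trans m_gt0 m_le).
apply: perm_eq_of_prod_sub => z.
pose P s := \prod_(n < N) (z - y s n).
have P_deriv t : 0 < t < 1 -> has_cderiv P t Q.[z].
  move=> /andP[t_gt0 t_lt1]; apply: has_cderiv_prod_sub => // [n l /eqP|n].
    by apply: contraTeq; apply: y_neq; rewrite !ltW.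
  by rewrite -prodfV hornerQ; apply: y_deriv; rewrite t_gt0.
have P_cont : ccontinuous_on `[0, 1] P.
  by apply: ccontinuous_on_prod => n; apply: ccontinuous_onB (ccontinuous_on_cst _ _) _.
have := has_cderiv_cst_increment ltr01 P_cont P_deriv.
rewrite subr0 mul1r => /(canRL (subrK _)) P1.
rewrite -hc -/(P 1) P1 /P prod_sub_gamma hornerQ addrCA -big_split /=; congr (_ + _).
by apply: eq_bigr => m _; rewrite -mulrDl subrK.
Qed.
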